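(* Let $\Pi\subseteq\Sigma$. The cone $\sigma_\Pi$ contains a nonzero linear subspace of $N_\mathbb{R}$ if and only if $\sigma^1_\Pi\cap\sigma^2_\Pi\ne\{0\}$.
   Context: $N\cong\mathbb{Z}^d$, $\sigma\subset N_\mathbb{R}$ a strongly convex rational polyhedral cone of dimension $d$, $\Sigma=\sigma(1)$ its set of rays, $n(\rho)$ the primitive generator of $\rho$. $\sigma_\Pi$ is the cone generated over $\mathbb{R}_{\ge0}$ by $-n(\rho)$, $\rho\in\Pi$, and $n(\rho)$, $\rho\in\Sigma\setminus\Pi$; $\sigma^1_\Pi$ is the cone generated over $\mathbb{R}_{\ge0}$ by $n(\rho)$, $\rho\in\Pi$; $\sigma^2_\Pi$ is the cone generated over $\mathbb{R}_{\ge0}$ by $n(\rho)$, $\rho\in\Sigma\setminus\Pi$ (the cone generated by the empty set is $\{0\}$). *)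

From HB Require Import structures.
From mathcomp Require Import all_boot all_order all_algebra.
From mathcomp Require Import reals.
Set Implicit Arguments. Unset Strict Implicit. Unset Printing Implicit Defensive.
Import Order.TTheory GRing.Theory Num.Theory.
Local Open Scope ring_scope.

(* N_R = R^d is modelled by row vectors 'rV[R]_d; N = Z^d is the set of
   vectors with integer coordinates. Subsets of N_R are predicates. *)
Section Cones.
Variables (R : realType) (d : nat).
Local Notation V := 'rV[R]_d.

Definition lattice (x : V) : Prop := forall j, x ord0 j \is a Num.int.

Definition dotp (m x : V) : R := \sum_j m ord0 j * x ord0 j.

Definition coneGen (S : V -> Prop) : V -> Prop := fun x =>
  exists (s : seq V) (c : V -> R),
    (forall v, v \in s -> S v) /\ (forall v, 0 <= c v) /\
    x = \sum_(v <- s) c v *: v.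

Definition ratPolyCone (sigma : V -> Prop) : Prop :=
  exists s : seq V, (forall v, v \in s -> lattice v) /\
    forall x, sigma x <-> coneGen (fun v => v \in s) x.

Definition stronglyConvex (sigma : V -> Prop) : Prop :=
  forall x, sigma x -> sigma (- x) -> x = 0.

(* dim sigma = d : the linear span of sigma is all of N_R *)
Definition fullDim (sigma : V -> Prop) : Prop :=
  forall x, exists y z, sigma y /\ sigma z /\ x = y - z.

Definition face (sigma tau : V -> Prop) : Prop :=
  exists m : V, (forall y, sigma y -> 0 <= dotp m y) /\
    forall x, tau x <-> (sigma x /\ dotp m x = 0).

Definition isRay (sigma rho : V -> Prop) : Prop :=
  face sigma rho /\
  exists u : V, u != 0 /\ forall x, rho x <-> exists t : R, 0 <= t /\ x = t *: u.

Definition primGen (rho : V -> Prop) (u : V) : Prop :=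
  lattice u /\ u != 0 /\ rho u /\
  forall w, lattice w -> rho w -> exists k : nat, w = k%:R *: u.

Definition rayGen (sigma : V -> Prop) (u : V) : Prop :=
  exists rho, isRay sigma rho /\ primGen rho u.

(* Π ⊆ Σ is represented by the set of primitive generators of its rays. *)
Definition sigmaPi (sigma Pi : V -> Prop) : V -> Prop :=
  coneGen (fun v => Pi (- v) \/ (rayGen sigma v /\ ~ Pi v)).

Definition sigma1 (Pi : V -> Prop) : V -> Prop := coneGen Pi.

Definition sigma2 (sigma Pi : V -> Prop) : V -> Prop :=
  coneGen (fun v => rayGen sigma v /\ ~ Pi v).

End Cones.

From HB Require Import structures.
From mathcomp Require Import all_boot all_order all_algebra.
From mathcomp Require Import reals.
Set Implicit Arguments. Unset Strict Implicit. Unset Printing Implicit Defensive.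
Import Order.TTheory GRing.Theory Num.Theory.
Local Open Scope ring_scope.

(* Every element of sigma_Pi splits as b - a with a in sigma^1_Pi and b in
   sigma^2_Pi. If sigma_Pi contains the line through x != 0, write
   x = b - a and -x = b' - a'; then a + a' = b + b' lies in both cones, and it
   cannot vanish: sigma^1_Pi and sigma^2_Pi sit inside the strongly convex
   cone sigma, so a + a' = 0 forces a = a' = 0, likewise b = b' = 0, whence
   x = 0. Conversely a nonzero x in both cones gives the line R x, since
   t x = t x - 0 for t >= 0 and t x = 0 - (-t) x for t < 0. *)

Section ConeGen.
Variables (R : realType) (d : nat).
Local Notation V := 'rV[R]_d.
Implicit Types (S T : V -> Prop) (x y : V).

Lemma coneGen0 S : coneGen S 0.
Proof. by exists [::], (fun=> 0); rewrite big_nil. Qed.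

Lemma sum_scale_eq_count (s : seq V) (w : V) (a : R) :
  \sum_(v <- s) (if v == w then a else 0) *: v = (a *+ count_mem w s) *: w.
Proof.
elim: s => [|u s IH]; first by rewrite big_nil mulr0n scale0r.
rewrite big_cons IH /= mulrnDr scalerDl; congr (_ + _).
by case: eqP => [->|_]; rewrite ?mulr1n ?mulr0n ?scale0r.
Qed.

(* Coefficients are indexed by vectors, not by positions in the list, so a
   generator already present must absorb t spread over its k occurrences. *)
Lemma coneGen_cons S w t x :
  S w -> 0 <= t -> coneGen S x -> coneGen S (t *: w + x).
Proof.
move=> Sw t_ge0 [s [c [sS [c_ge0 ->]]]].
have [ws|wNs] := boolP (w \in s).
  have k_gt0 : (0 < count_mem w s)%N by rewrite -has_count has_pred1.
  set k : R := (count_mem w s)%:R.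
  have k_neq0 : k != 0 by rewrite pnatr_eq0 -lt0n.
  exists s, (fun v => c v + (if v == w then t / k else 0)); split=> //; split.
    move=> v; apply: addr_ge0 => //; case: eqP => // _.
    by apply: divr_ge0 => //; rewrite ler0n.
  under [RHS]eq_bigr do rewrite scalerDl.
  rewrite big_split /= sum_scale_eq_count addrC -mulr_natr mulfVK //.
exists (w :: s), (fun v => if v == w then t else c v); split.
  by move=> v; rewrite inE => /orP [/eqP ->|/sS].
split; first by move=> v; case: eqP.
rewrite big_cons eqxx; congr (_ + _); apply: eq_big_seq => v vs.
by case: eqP => // vw; move: wNs; rewrite -vw vs.
Qed.

Lemma coneGenD S x y : coneGen S x -> coneGen S y -> coneGen S (x + y).
Proof.
move=> [s [c [sS [c_ge0 ->]]]] Sy; elim: s sS => [|u s IH] sS.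
  by rewrite big_nil add0r.
rewrite big_cons -addrA; apply: coneGen_cons; first exact/sS/mem_head.
  exact: c_ge0.
by apply: IH => v vs; apply: sS; rewrite inE vs orbT.
Qed.

Lemma coneGenZ S k x : 0 <= k -> coneGen S x -> coneGen S (k *: x).
Proof.
move=> k_ge0 [s [c [sS [c_ge0 ->]]]].
exists s, (fun v => k * c v); split=> //; split; first by move=> v; exact: mulr_ge0.
by rewrite scaler_sumr; apply: eq_bigr => v _; rewrite scalerA.
Qed.

Lemma coneGen_min S (K : V -> Prop) :
  K 0 -> (forall x y, K x -> K y -> K (x + y)) ->
  (forall k x, 0 <= k -> K x -> K (k *: x)) -> (forall v, S v -> K v) ->
  forall x, coneGen S x -> K x.
Proof.
move=> K0 KD KZ SK _ [s [c [sS [c_ge0 ->]]]].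
elim: s sS => [|u s IH] sS; first by rewrite big_nil.
rewrite big_cons; apply: KD; first exact/KZ/SK/sS/mem_head.
by apply: IH => v vs; apply: sS; rewrite inE vs orbT.
Qed.

Lemma coneGen_trans S T x :
  (forall v, S v -> coneGen T v) -> coneGen S x -> coneGen T x.
Proof.
move=> ST; apply: coneGen_min ST x; [exact: coneGen0 | exact: coneGenD | exact: coneGenZ].
Qed.

Lemma coneGen_gen S v : S v -> coneGen S v.
Proof.
by move=> Sv; rewrite -[v]addr0 -[v in v + _]scale1r; apply: coneGen_cons; last exact: coneGen0.
Qed.

Lemma coneGen_mono S T x : (forall v, S v -> T v) -> coneGen S x -> coneGen T x.
Proof. by move=> ST; apply: coneGen_trans => v /ST; exact: coneGen_gen. Qed.

Lemma coneGenN S x : coneGen S x -> coneGen (fun v => S (- v)) (- x).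
Proof.
move: x; apply: coneGen_min => [|x y Nx Ny|k x k_ge0 Nx|v Sv].
- by rewrite oppr0; exact: coneGen0.
- by rewrite opprD; exact: coneGenD.
- by rewrite -scalerN; exact: coneGenZ.
- by apply: coneGen_gen; rewrite opprK.
Qed.

Section OppositeGenerators.
Variables P Q : V -> Prop.
Local Notation coneGenPQ := (coneGen (fun v => P (- v) \/ Q v)).

Lemma coneGen_oppU_decomp y :
  coneGenPQ y -> exists a b, coneGen P a /\ coneGen Q b /\ y = b - a.
Proof.
move: y; apply: coneGen_min => [|_ _ [a [b [Pa [Qb ->]]]] [a' [b' [Pa' [Qb' ->]]]]
                      |k _ k_ge0 [a [b [Pa [Qb ->]]]] | v [Pv|Qv]].
- by exists 0, 0; rewrite subr0; do !split; exact: coneGen0.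
- exists (a + a'), (b + b'); split; first exact: coneGenD.
  by split; [exact: coneGenD | rewrite opprD addrACA].
- by exists (k *: a), (k *: b); rewrite scalerBr; do !split; exact: coneGenZ.
- by exists (- v), 0; rewrite sub0r opprK; do !split; [exact: coneGen_gen | exact: coneGen0].
- by exists 0, v; rewrite subr0; do !split; [exact: coneGen0 | exact: coneGen_gen].
Qed.

Lemma coneGen_oppUB a b : coneGen P a -> coneGen Q b -> coneGenPQ (b - a).
Proof.
move=> Pa Qb; apply: coneGenD; first by apply: coneGen_mono Qb => v; right.
by apply: coneGen_mono (coneGenN Pa) => v; left.
Qed.

Lemma coneGen_oppU_line x :
  coneGen P x -> coneGen Q x -> forall k, coneGenPQ (k *: x).
Proof.
move=> Px Qx k; have [k_ge0|k_lt0] := lerP 0 k.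
  by rewrite -[_ *: x]subr0; apply: coneGen_oppUB; [exact: coneGen0 | exact: coneGenZ].
rewrite -[_ *: x]opprK -sub0r -scaleNr; apply: coneGen_oppUB; last exact: coneGen0.
by apply: coneGenZ => //; rewrite oppr_ge0 ltW.
Qed.

Lemma coneGen_oppU_meet (sigma : V -> Prop) x :
  stronglyConvex sigma ->
  (forall a, coneGen P a -> sigma a) -> (forall b, coneGen Q b -> sigma b) ->
  x != 0 -> coneGenPQ x -> coneGenPQ (- x) ->
  exists y, y != 0 /\ coneGen P y /\ coneGen Q y.
Proof.
move=> hsc Psig Qsig x_neq0 /coneGen_oppU_decomp [a [b [Pa [Qb xE]]]]
  /coneGen_oppU_decomp [a' [b' [Pa' [Qb' Nx]]]].
have abE : a + a' = b + b'.
  by apply/eqP; rewrite -subr_eq0 opprD addrACA -(opprB b) -(opprB b') -xE -Nx opprK addNr.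
have cone0 u u' : sigma u -> sigma u' -> u + u' = 0 -> u = 0.
  by move=> su su' /eqP; rewrite addr_eq0 => /eqP uE; apply: hsc; rewrite // uE opprK.
exists (a + a'); split; last by split; [|rewrite abE]; exact: coneGenD.
apply: contra x_neq0 => /eqP aa'0; rewrite xE.
have a0 : a = 0 by apply: cone0 aa'0; exact: Psig.
have b0 : b = 0 by apply: (cone0 _ b') => //; [exact: Qsig | exact: Qsig | rewrite -abE].
by rewrite a0 b0 subr0.
Qed.

End OppositeGenerators.
End ConeGen.

Section Rays.
Variables (R : realType) (d : nat) (sigma : 'rV[R]_d -> Prop).

Lemma rayGen_mem u : rayGen sigma u -> sigma u.
Proof. by case=> rho [[[m [_ rhoE]] _] [_ [_ [/rhoE[]]]]]. Qed.

Lemma ratPolyCone_coneGen_rayGen x :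
  ratPolyCone sigma -> coneGen (rayGen sigma) x -> sigma x.
Proof.
case=> s [_ sigmaE] rays_x; apply/sigmaE.
by apply: coneGen_trans rays_x => v /rayGen_mem /sigmaE.
Qed.

End Rays.

Theorem mainTheorem7 (R : realType) (d : nat) (sigma : 'rV[R]_d -> Prop)
  (hrat : ratPolyCone sigma) (hsc : stronglyConvex sigma) (hdim : fullDim sigma)
  (Pi : 'rV[R]_d -> Prop) (hPi : forall u, Pi u -> rayGen sigma u) :
  (exists U : {vspace 'rV[R]_d}, U != 0%VS /\ forall x, x \in U -> sigmaPi sigma Pi x)
  <-> (exists x : 'rV[R]_d, x != 0 /\ sigma1 Pi x /\ sigma2 sigma Pi x).
Proof.
split=> [[U [U_neq0 U_sub]] | [x [x_neq0 [x1 x2]]]].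
  apply: (coneGen_oppU_meet hsc _ _ (x := vpick U)).
  - by move=> a /(coneGen_mono hPi) /(ratPolyCone_coneGen_rayGen hrat).
  - by move=> b /(coneGen_mono (fun v => @proj1 _ _)) /(ratPolyCone_coneGen_rayGen hrat).
  - by rewrite vpick0.
  - exact/U_sub/memv_pick.
  - by apply: U_sub; rewrite memvN memv_pick.
exists <[x]>%VS; split; first by rewrite -dimv_eq0 dim_vline x_neq0.
by move=> y /vlineP [k ->]; exact: coneGen_oppU_line.
Qed.
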